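(* Fix any total budget $\mathrm{TB}\in\mathbb N_0$ and let $n\in\mathbb N$. Then the disjunctive sum $n+\bar n=0$, where $n$ denotes the integer game form.
   Context: Game forms are defined recursively: $G=\{G^{\mathcal L}\mid G^{\mathcal R}\}$ with finite sets of Left and Right options, and finite birthday. $0=\{\varnothing\mid\varnothing\}$; for $n\in\mathbb N$ the integer game form is $n=\{n-1\mid\varnothing\}$. The conjugate is $\bar G=\{\overline{G^{\mathcal R}}\mid\overline{G^{\mathcal L}}\}$. The budget set for total budget $\mathrm{TB}$ is $\mathcal B=\{0,\dots,\mathrm{TB},\hat 0,\dots,\widehat{\mathrm{TB}}\}$: state $p$ (resp. $\hat p$) means Left holds $p$ dollars and Right holds $\mathrm{TB}-p$, and Right (resp. Left) holds the tie-breaking marker. Play of $(G,\tilde p)$: at every position (terminal ones included) both players bid simultaneously, Left $\ell\in\{0,\dots,p\}$, Right $r\in\{0,\dots,\mathrm{TB}-p\}$. If Left holds the marker (state $\hat p$): if $\ell>r$ Left moves to $(G^L,\widehat{p-\ell})$, or, including the marker (allowed when $\ell\ge r$), to $(G^L,p-\ell)$; if $\ell=r$ Left wins, the marker passes to Right, play continues at $(G^L,p-\ell)$; if $\ell<r$ Right moves to $(G^R,\widehat{p+r})$. Symmetrically when Right holds the marker (state $p$): if $r>\ell$ Right moves to $(G^R,p+r)$ or, including the marker, to $(G^R,\widehat{p+r})$; if $r=\ell$ Right wins, the marker passes to Left, play continues at $(G^R,\widehat{p+r})$; if $r<\ell$ Left moves to $(G^L,p-\ell)$. A player who wins a bid but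 has no option loses. $o(G,\tilde p)\in\{\mathrm L,\mathrm R\}$ is the winner under optimal play; $\mathrm L>\mathrm R$. Disjunctive sum $G+H=\{G^{\mathcal L}+H,G+H^{\mathcal L}\mid G^{\mathcal R}+H,G+H^{\mathcal R}\}$. $G\ge H$ means $o(G+X,\tilde p)\ge o(H+X,\tilde p)$ for all game forms $X$ and all $\tilde p\in\mathcal B$; $G=H$ means $G\ge H$ and $H\ge G$. *)

From mathcomp Require Import all_boot.
Set Implicit Arguments. Unset Strict Implicit. Unset Printing Implicit Defensive.

(* Game forms: finite lists of Left / Right options; finite birthday is automatic
   for an inductive type. *)
Inductive game : Type := Game of seq game & seq game.

Definition zero : game := Game [::] [::].

Fixpoint intg (n : nat) : game :=
  match n with 0 => zero | n'.+1 => Game [:: intg n'] [::] end.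

Fixpoint conj (G : game) : game :=
  match G with Game L R => Game (map conj R) (map conj L) end.

Fixpoint gsum (G H : game) {struct G} : game :=
  match G with
  | Game GL GR =>
    let fix aux (H : game) : game :=
      match H with
      | Game HL HR =>
        Game (map (fun g => gsum g H) GL ++ map aux HL)
             (map (fun g => gsum g H) GR ++ map aux HR)
      end in aux H
  end.

(* Budget state: p = Left's dollars (Right holds TB - p);
   lm = true  : state \hat p (Left holds the tie-breaking marker),
   lm = false : state p      (Right holds the marker).
   [lwins TB G p lm] is true iff o(G, state) = L under optimal play, i.e. Left
   has a bid l in {0..p} such that for every Right bid r in {0..TB-p} the
   resulting continuation is won by Left (a player winning a bid chooses the
   option and, when allowed, whether to include the marker). A player who wins
   a bid but has no option loses. *)
Fixpoint lwins (TB : nat) (G : game) (p : nat) (lm : bool) {struct G} : bool :=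
  match G with
  | Game GL GR =>
    let Lmove p' lm' := has (fun g => lwins TB g p' lm') GL in
    let Rmove p' lm' := has (fun g => ~~ lwins TB g p' lm') GR in
    [exists l : 'I_p.+1, [forall r : 'I_(TB - p).+1,
      if lm then
        (if r < l then Lmove (p - l) true || Lmove (p - l) false
         else if l == r :> nat then Lmove (p - l) false
         else ~~ Rmove (p + r) true)
      else
        (if l < r then ~~ (Rmove (p + r) false || Rmove (p + r) true)
         else if l == r :> nat then ~~ Rmove (p + r) true
         else Lmove (p - l) false)]]
  end.

Definition game_ge (TB : nat) (G H : game) : Prop :=
  forall (X : game) (p : nat) (lm : bool), p <= TB ->
    lwins TB (gsum H X) p lm -> lwins TB (gsum G X) p lm.

Definition game_eq (TB : nat) (G H : game) : Prop :=
  game_ge TB G H /\ game_ge TB H G.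

From mathcomp Require Import all_boot zify.
Set Implicit Arguments. Unset Strict Implicit. Unset Printing Implicit Defensive.

(* Write n + \bar n + X as a + \bar b + X with a = b = n.  Lowering a and b by
   one each does not change the outcome: compare the two positions option by
   option, by induction on X and on a + b.  The only options without a
   counterpart are the moves in one integer once the other one is exhausted;
   they are handled by monotonicity in Left's budget and the facts that a
   dollar is worth at least the tie-breaking marker and that, given one extra
   move in the integer, Left loses nothing by holding the marker. *)

Fixpoint game_ind_in (P : game -> Prop)
  (IH : forall GL GR, (forall g, List.In g GL -> P g) ->
          (forall g, List.In g GR -> P g) -> P (Game GL GR))
  (G : game) {struct G} : P G :=
  let fix all_in (s : seq game) : forall g, List.In g s -> P g :=
    match s with
    | [::] => fun g (gs : List.In g [::]) => match gs with end
    | x :: s' => fun g gs =>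
        match gs with
        | or_introl ex => eq_ind x P (game_ind_in IH x) g ex
        | or_intror gs' => all_in s' g gs'
        end
    end in
  match G with Game GL GR => IH GL GR (all_in GL) (all_in GR) end.

Lemma has_in_mono (T : Type) (a1 a2 : pred T) (s : seq T) :
  (forall x, List.In x s -> a1 x -> a2 x) -> has a1 s -> has a2 s.
Proof.
elim: s => [|x s IHs] //= a12 /orP [a1x|a1s]; apply/orP.
- by left; apply: a12 a1x; left.
- by right; apply: IHs a1s => y ys; apply: a12; right.
Qed.

Lemma has_inPn (T : Type) (a : pred T) (s : seq T) :
  reflect (forall x, List.In x s -> ~~ a x) (~~ has a s).
Proof.
elim: s => [|x s IHs] /=; first by left.
rewrite negb_or; apply: (iffP andP) => [[ax /IHs as_] y [<-|ys] //|Nas].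
- exact: as_.
- by split; [apply: Nas; left | apply/IHs => y ys; apply: Nas; right].
Qed.

Section Bidding.

Variable TB : nat.

Definition lmove_wins (GL : seq game) (q : nat) (m : bool) : bool :=
  has (fun g => lwins TB g q m) GL.
Definition rmove_wins (GR : seq game) (q : nat) (m : bool) : bool :=
  has (fun g => ~~ lwins TB g q m) GR.

Definition bid_outcome GL GR p (lm : bool) (l r : nat) : bool :=
  if lm then
    (if r < l then lmove_wins GL (p - l) true || lmove_wins GL (p - l) false
     else if l == r then lmove_wins GL (p - l) false
     else ~~ rmove_wins GR (p + r) true)
  else
    (if l < r then ~~ (rmove_wins GR (p + r) false || rmove_wins GR (p + r) true)
     else if l == r then ~~ rmove_wins GR (p + r) true
     else lmove_wins GL (p - l) false).

Lemma lwinsP GL GR p lm : reflect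
  (exists2 l, l <= p & forall r, r <= TB - p -> bid_outcome GL GR p lm l r)
  (lwins TB (Game GL GR) p lm).
Proof.
apply: (iffP existsP) => [[l /forallP wl]|[l lp wl]].
- by exists l; [rewrite -ltnS | move=> r rb; exact: (wl (Ordinal (rb : r < (TB - p).+1)))].
- by exists (Ordinal (lp : l < p.+1)); apply/forallP => r; apply: wl; rewrite -ltnS.
Qed.

Lemma lwinsPn GL GR p lm : reflect
  (forall l, l <= p -> exists2 r, r <= TB - p & ~~ bid_outcome GL GR p lm l r)
  (~~ lwins TB (Game GL GR) p lm).
Proof.
rewrite [lwins _ _ _ _]/= negb_exists.
apply: (iffP forallP) => [Nw l lp|Nw l].
- have /existsP [r Nwr] := Nw (Ordinal (lp : l < p.+1)).
  by exists r => //; rewrite -ltnS.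
- have [r rb Nwr] := Nw l (ltn_ord l).
  by apply/existsP; exists (Ordinal (rb : r < (TB - p).+1)).
Qed.

Lemma outcomeT_lt GL GR p l r : r < l ->
  bid_outcome GL GR p true l r = lmove_wins GL (p - l) true || lmove_wins GL (p - l) false.
Proof. by rewrite /bid_outcome => ->. Qed.

Lemma outcomeT_eq GL GR p l : bid_outcome GL GR p true l l = lmove_wins GL (p - l) false.
Proof. by rewrite /bid_outcome ltnn eqxx. Qed.

Lemma outcomeT_gt GL GR p l r : l < r ->
  bid_outcome GL GR p true l r = ~~ rmove_wins GR (p + r) true.
Proof. by move=> lr; rewrite /bid_outcome ltnNge (ltnW lr) ltn_eqF. Qed.

Lemma outcomeF_lt GL GR p l r : l < r ->
  bid_outcome GL GR p false l r =
  ~~ (rmove_wins GR (p + r) false || rmove_wins GR (p + r) true).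
Proof. by rewrite /bid_outcome => ->. Qed.

Lemma outcomeF_eq GL GR p l : bid_outcome GL GR p false l l = ~~ rmove_wins GR (p + l) true.
Proof. by rewrite /bid_outcome ltnn eqxx. Qed.

Lemma outcomeF_gt GL GR p l r : r < l ->
  bid_outcome GL GR p false l r = lmove_wins GL (p - l) false.
Proof. by move=> rl; rewrite /bid_outcome ltnNge (ltnW rl) gtn_eqF. Qed.

Lemma lmove_wins_mono GL q m q' m' :
  (forall g, List.In g GL -> lwins TB g q m -> lwins TB g q' m') ->
  lmove_wins GL q m -> lmove_wins GL q' m'.
Proof. exact: has_in_mono. Qed.

Lemma rmove_wins_mono GR q m q' m' :
  (forall g, List.In g GR -> lwins TB g q' m' -> lwins TB g q m) ->
  rmove_wins GR q m -> rmove_wins GR q' m'.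
Proof. by move=> wGR; apply: has_in_mono => g /wGR; apply: contra. Qed.

Lemma lwins_budgetS G p m : lwins TB G p m -> lwins TB G p.+1 m.
Proof.
elim/game_ind_in: G p m => GL GR IHL IHR p m /lwinsP [l lp wl].
apply/lwinsP; exists l => [|r rb]; first lia.
move/(_ r ltac:(lia)): wl.
have lS : p.+1 - l = (p - l).+1 by lia.
case: m; case: (ltngtP l r) => [lr|rl|<-].
- by rewrite !outcomeT_gt // addSn; apply/contra/rmove_wins_mono => g gR; apply: IHR.
- rewrite !outcomeT_lt // lS => /orP [w|w]; apply/orP; [left|right];
    by apply: lmove_wins_mono w => g gL; apply: IHL.
- by rewrite !outcomeT_eq lS; apply: lmove_wins_mono => g gL; apply: IHL.
- rewrite !outcomeF_lt // addSn; apply/contra => /orP [w|w]; apply/orP; [left|right];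
    by apply: rmove_wins_mono w => g gR; apply: IHR.
- by rewrite !outcomeF_gt // lS; apply: lmove_wins_mono => g gL; apply: IHL.
- by rewrite !outcomeF_eq addSn; apply/contra/rmove_wins_mono => g gR; apply: IHR.
Qed.

Lemma lwins_budget_mono G p p' m : p <= p' -> lwins TB G p m -> lwins TB G p' m.
Proof. by move=> /subnK <-; elim: (p' - p) => // k IHk /IHk /lwins_budgetS. Qed.

Lemma lwins_dollar_marker G p : p < TB -> lwins TB G p true -> lwins TB G p.+1 false.
Proof.
elim/game_ind_in: G p => GL GR IHL IHR p pTB /lwinsP [l lp wl].
have budget_mono q q' m : q <= q' -> forall g, lwins TB g q m -> lwins TB g q' m.
  by move=> qq' g; apply: lwins_budget_mono.
apply/lwinsP; case: (leqP l (TB - p)) => lb.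
- exists l.+1 => [|r rb]; first lia.
  case: (ltngtP l.+1 r) => [lr|rl|lr].
  + rewrite outcomeF_lt //; have := wl r ltac:(lia); rewrite outcomeT_gt; last lia.
    apply/contra => /orP [w|w].
    * apply: rmove_wins_mono w => g gR; rewrite addSn; apply: IHR => //; lia.
    * by apply: rmove_wins_mono w => g gR; apply: budget_mono; lia.
  + by rewrite outcomeF_gt // subSS; have := wl l lb; rewrite outcomeT_eq.
  + rewrite -lr outcomeF_eq; have := wl l.+1 ltac:(lia); rewrite outcomeT_gt //.
    by apply/contra/rmove_wins_mono => g gR; apply: budget_mono; lia.
- exists l => [|r rb]; first lia.
  rewrite outcomeF_gt; last lia.
  have := wl r ltac:(lia); rewrite outcomeT_lt; last lia.
  have -> : p.+1 - l = (p - l).+1 by lia.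
  case/orP => w; apply: lmove_wins_mono w => g gL.
  + by apply: IHL => //; lia.
  + exact: lwins_budgetS.
Qed.

Lemma lwins_options_mono GL GR HL HR p m : p <= TB ->
  (forall q m, q <= TB -> lmove_wins GL q m -> lmove_wins HL q m) ->
  (forall q m, q <= TB -> rmove_wins HR q m -> rmove_wins GR q m) ->
  lwins TB (Game GL GR) p m -> lwins TB (Game HL HR) p m.
Proof.
move=> pTB LGH RHG /lwinsP [l lp wl]; apply/lwinsP; exists l => // r rb.
have q1 : p - l <= TB by lia.
have q2 : p + r <= TB by lia.
move/(_ r rb): wl; rewrite /bid_outcome; case: m; do 2?case: ifP => _.
- by case/orP => w; apply/orP; [left|right]; apply: LGH.
- exact: LGH.
- by apply/contra/RHG.
- by apply/contra => /orP [w|w]; apply/orP; [left|right]; apply: RHG.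
- by apply/contra/RHG.
- exact: LGH.
Qed.

Definition intsum a b Y := gsum (gsum (intg a) (conj (intg b))) Y.

Definition lwins_int a b Y p m := lwins TB (intsum a b Y) p m.

Definition intsumL a b YL YR : seq game :=
  (if a is a'.+1 then [:: intsum a' b (Game YL YR)] else [::]) ++ map (intsum a b) YL.
Definition intsumR a b YL YR : seq game :=
  (if b is b'.+1 then [:: intsum a b' (Game YL YR)] else [::]) ++ map (intsum a b) YR.

Lemma lwins_intE a b YL YR p m :
  lwins_int a b (Game YL YR) p m = lwins TB (Game (intsumL a b YL YR) (intsumR a b YL YR)) p m.
Proof. by case: a; case: b. Qed.

Lemma lmove_wins_intsumL a b YL YR q m : lmove_wins (intsumL a b YL YR) q m =
  (if a is a'.+1 then lwins_int a' b (Game YL YR) q m else false)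
  || has (fun y => lwins_int a b y q m) YL.
Proof. by rewrite /lmove_wins has_cat has_map; case: a => [|a] //=; rewrite orbF. Qed.

Lemma rmove_wins_intsumR a b YL YR q m : rmove_wins (intsumR a b YL YR) q m =
  (if b is b'.+1 then ~~ lwins_int a b' (Game YL YR) q m else false)
  || has (fun y => ~~ lwins_int a b y q m) YR.
Proof. by rewrite /rmove_wins has_cat has_map; case: b => [|b] //=; rewrite orbF. Qed.

Lemma lwins_int_mono Y a b a' b' p m : p <= TB -> a <= a' -> b' <= b ->
  lwins_int a b Y p m -> lwins_int a' b' Y p m.
Proof.
elim/game_ind_in: Y a b a' b' p m => YL YR IHL IHR a b a' b' p m.
have [k] := ubnP (a + b); elim: k a b a' b' p m => // k IHk a b a' b' p m abk pTB aa' b'b.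
rewrite !lwins_intE; apply: lwins_options_mono => // q m' qTB.
- rewrite !lmove_wins_intsumL => /orP [w|w]; apply/orP; [left|right].
  + case: a w aa' abk => [|a] // w aa' abk; case: a' aa' => [|a'] // aa'.
    by apply: IHk w => //; lia.
  + by apply: has_in_mono w => y yL; apply: IHL.
- rewrite !rmove_wins_intsumR => /orP [w|w]; apply/orP; [left|right].
  + case: b' w b'b => [|b'] // w b'b; case: b b'b abk => [|b] // b'b abk.
    by apply/contra: w; apply: IHk => //; lia.
  + by apply: has_in_mono w => y yR; apply/contra/IHR.
Qed.

Lemma lmove_wins_intsum_mono a b a' b' YL YR q m : q <= TB -> a <= a' -> b' <= b ->
  lmove_wins (intsumL a b YL YR) q m -> lmove_wins (intsumL a' b' YL YR) q m.
Proof.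
move=> qTB aa' b'b; rewrite !lmove_wins_intsumL => /orP [w|w]; apply/orP; [left|right].
- case: a w aa' => [|a] // w aa'; case: a' aa' => [|a'] // aa'.
  by apply: lwins_int_mono w => //; lia.
- by apply: has_in_mono w => y _; apply: lwins_int_mono.
Qed.

Lemma rmove_wins_intsum_mono a b a' b' YL YR q m : q <= TB -> a <= a' -> b' <= b ->
  rmove_wins (intsumR a' b' YL YR) q m -> rmove_wins (intsumR a b YL YR) q m.
Proof.
move=> qTB aa' b'b; rewrite !rmove_wins_intsumR => /orP [w|w]; apply/orP; [left|right].
- case: b' w b'b => [|b'] // w b'b; case: b b'b => [|b] // b'b.
  by apply/contra: w; apply: lwins_int_mono => //; lia.
- by apply: has_in_mono w => y _; apply/contra/lwins_int_mono.
Qed.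

(* Left bids one dollar less than before and wins the former ties with the
   marker; a zero bid is replaced by a tie won by moving in the extra integer. *)
Lemma lwins_int_marker a b Y p : p <= TB ->
  lwins_int a b Y p false -> lwins_int a.+1 b Y p true.
Proof.
case: Y => YL YR pTB w; have := w; rewrite !lwins_intE => /lwinsP [l lp wl].
apply/lwinsP; case: l lp wl => [|l] lp wl.
- exists 0 => // -[|r] rb.
  + by rewrite outcomeT_eq subn0 lmove_wins_intsumL w.
  + rewrite outcomeT_gt //; have := wl r.+1 rb; rewrite outcomeF_lt //.
    by apply/contra => Rr; apply/orP; right; apply: rmove_wins_intsum_mono Rr => //; lia.
- have Lw : lmove_wins (intsumL a b YL YR) (p - l.+1) false ->
              lmove_wins (intsumL a.+1 b YL YR) (p - l) false.
    move=> Ll; apply: (@lmove_wins_intsum_mono a b) => //; first lia.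
    by apply: lmove_wins_mono Ll => g _; apply: lwins_budget_mono; lia.
  exists l => [|r rb]; first lia.
  case: (ltngtP l r) => [lr|rl|lr].
  + rewrite outcomeT_gt //; have := wl r rb.
    case: (ltngtP l.+1 r) => [lr'|rl'|lr']; first rewrite outcomeF_lt //; last first.
    * by rewrite -lr' outcomeF_eq; apply/contra/rmove_wins_intsum_mono => //; lia.
    * lia.
    * by apply/contra => Rr; apply/orP; right; apply: rmove_wins_intsum_mono Rr => //; lia.
  + rewrite outcomeT_lt //; have := wl r rb; rewrite outcomeF_gt; last lia.
    by move/Lw => Ll; apply/orP; right.
  + by have := wl r rb; rewrite -lr outcomeT_eq outcomeF_gt // => /Lw.
Qed.

Lemma nlwins_int_marker a b Y p : p <= TB ->
  ~~ lwins_int a b Y p true -> ~~ lwins_int a b.+1 Y p false.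
Proof.
case: Y => YL YR pTB Nw; have := Nw; rewrite !lwins_intE => /lwinsPn Nwl.
apply/lwinsPn => l lp; have [r rb Nwlr] := Nwl l lp.
case: (ltngtP l r) => [lr|rl|lr].
- exists r => //; rewrite outcomeF_lt //; move: Nwlr; rewrite outcomeT_gt // !negbK => Rr.
  by apply/orP; right; apply: rmove_wins_intsum_mono Rr => //; lia.
- exists r => //; rewrite outcomeF_gt //; move: Nwlr; rewrite outcomeT_lt //.
  by apply/contra => Ll; apply/orP; right; apply: lmove_wins_intsum_mono Ll => //; lia.
- move: Nwlr; rewrite -lr outcomeT_eq; case: l lr lp => [|l] lr lp Nwlr.
  + exists 0 => //; rewrite outcomeF_eq negbK addn0 rmove_wins_intsumR /=.
    by rewrite Nw.
  + exists l; first lia.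
    rewrite outcomeF_gt //; apply/contra: Nwlr; apply: lmove_wins_intsum_mono => //; lia.
Qed.

Lemma rmove_wins_intsumR0 c YL YR p q m :
  (forall y, List.In y YR -> lwins_int c 0 y p true) -> p <= q -> q <= TB -> m || (p < q) ->
  ~~ rmove_wins (intsumR c 0 YL YR) q m.
Proof.
move=> wR pq qTB mpq; rewrite rmove_wins_intsumR; apply/has_inPn => y /wR w; rewrite negbK.
case: m mpq => /= [_|pq']; first exact: lwins_budget_mono w.
by apply: (@lwins_budget_mono _ p.+1) => //; apply: lwins_dollar_marker w; lia.
Qed.

Lemma lmove_wins_intsumL0 c YL YR p q m :
  (forall y, List.In y YL -> ~~ lwins_int 0 c y p false) ->
  p <= TB -> q <= p -> ~~ m || (q < p) ->
  ~~ lmove_wins (intsumL 0 c YL YR) q m.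
Proof.
move=> NwL pTB qp mqp; rewrite lmove_wins_intsumL; apply/has_inPn => y /NwL; apply/contra => w.
case: m mqp w => /= [qp' w|_]; last exact: lwins_budget_mono.
by apply: (@lwins_budget_mono _ q.+1) => //; apply: lwins_dollar_marker w; lia.
Qed.

Lemma lwins_int_S0 a YL YR p m : p <= TB ->
  (forall y, List.In y YR -> lwins_int a 0 y p m) -> lwins_int a.+1 0 (Game YL YR) p m.
Proof.
move=> pTB wR.
have wR' y : List.In y YR -> lwins_int a.+1 0 y p true.
  by case: m wR => wR /wR; [apply: lwins_int_mono | apply: lwins_int_marker].
rewrite lwins_intE; apply/lwinsP; exists 0 => // r rb.
case: m wR => wR; case: r rb => [|r] rb.
- rewrite outcomeT_eq subn0 lmove_wins_intsumL /=; apply/orP; left.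
  rewrite lwins_intE; apply/lwinsP; exists 0 => // -[|r'] rb'.
  + by rewrite outcomeF_eq addn0; apply: (rmove_wins_intsumR0 YL wR).
  + rewrite outcomeF_lt // negb_or; apply/andP.
    by split; apply: (rmove_wins_intsumR0 YL wR) => //=; lia.
- by rewrite outcomeT_gt //; apply: (rmove_wins_intsumR0 YL wR') => //; lia.
- by rewrite outcomeF_eq addn0; apply: (rmove_wins_intsumR0 YL wR').
- rewrite outcomeF_lt // negb_or; apply/andP.
  by split; apply: (rmove_wins_intsumR0 YL wR') => //=; lia.
Qed.

Lemma nlwins_int_0S b YL YR p m : p <= TB ->
  (forall y, List.In y YL -> ~~ lwins_int 0 b y p m) -> ~~ lwins_int 0 b.+1 (Game YL YR) p m.
Proof.
move=> pTB NwL.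
have NwL' y : List.In y YL -> ~~ lwins_int 0 b.+1 y p false.
  by case: m NwL => NwL /NwL; [apply: nlwins_int_marker | apply/contra/lwins_int_mono].
rewrite lwins_intE; apply/lwinsPn => l lp; exists 0 => //.
case: m NwL => NwL; case: l lp => [|l] lp.
- by rewrite outcomeT_eq subn0; apply: (lmove_wins_intsumL0 YR NwL').
- rewrite outcomeT_lt // negb_or; apply/andP.
  by split; apply: (lmove_wins_intsumL0 YR NwL') => //=; lia.
- rewrite outcomeF_eq addn0 negbK rmove_wins_intsumR /=; apply/orP; left.
  rewrite lwins_intE; apply/lwinsPn => -[|l'] lp'; exists 0 => //.
  + by rewrite outcomeT_eq subn0; apply: (lmove_wins_intsumL0 YR NwL).
  + rewrite outcomeT_lt // negb_or; apply/andP.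
    by split; apply: (lmove_wins_intsumL0 YR NwL) => //=; lia.
- by rewrite outcomeF_gt //; apply: (lmove_wins_intsumL0 YR NwL') => //; lia.
Qed.

Lemma lwins_int_succ Y a b p m : p <= TB -> lwins_int a b Y p m -> lwins_int a.+1 b.+1 Y p m.
Proof.
elim/game_ind_in: Y a b p m => YL YR IHL IHR a b p m.
have [k] := ubnP (a + b); elim: k a b p m => // k IHk a b p m abk pTB.
rewrite !lwins_intE; apply: lwins_options_mono => // q m' qTB.
- rewrite !lmove_wins_intsumL => /orP [w|w]; apply/orP; [left|right].
  + by case: a w abk => [|a] // w abk; apply: IHk w => //; lia.
  + by apply: has_in_mono w => y yL; apply: IHL.
- rewrite !rmove_wins_intsumR => /orP [w|w]; apply/orP; last first.
  + by right; apply: has_in_mono w => y yR; apply/contra/IHR.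
  case: b w abk => [|b] w abk; last by left; apply/contra: w; apply: IHk => //; lia.
  right; apply: contraNT w => /has_inPn NwR.
  by apply: lwins_int_S0 => // y /NwR; rewrite negbK.
Qed.

Lemma lwins_int_pred Y a b p m : p <= TB -> lwins_int a.+1 b.+1 Y p m -> lwins_int a b Y p m.
Proof.
elim/game_ind_in: Y a b p m => YL YR IHL IHR a b p m.
have [k] := ubnP (a + b); elim: k a b p m => // k IHk a b p m abk pTB.
rewrite !lwins_intE; apply: lwins_options_mono => // q m' qTB.
- rewrite !lmove_wins_intsumL => /orP [w|w]; apply/orP; last first.
  + by right; apply: has_in_mono w => y yL; apply: IHL.
  case: a w abk => [|a] w abk; last by left; apply: IHk w => //; lia.
  by right; apply: contraTT w => /has_inPn NwL; apply: nlwins_int_0S.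
- rewrite !rmove_wins_intsumR => /orP [w|w]; apply/orP; [left|right].
  + by case: b w abk => [|b] // w abk; apply/contra: w; apply: IHk => //; lia.
  + by apply: has_in_mono w => y yR; apply/contra/IHR.
Qed.

Lemma lwins_int_SS Y a b p m : p <= TB -> lwins_int a.+1 b.+1 Y p m = lwins_int a b Y p m.
Proof. by move=> pTB; apply/idP/idP; [apply: lwins_int_pred | apply: lwins_int_succ]. Qed.

Lemma lwins_int_nn Y n p m : p <= TB -> lwins_int n n Y p m = lwins_int 0 0 Y p m.
Proof. by move=> pTB; elim: n => // n IHn; rewrite lwins_int_SS. Qed.

End Bidding.

Theorem mainTheorem13 (TB n : nat) : 0 < n ->
  game_eq TB (gsum (intg n) (conj (intg n))) zero.
Proof.
move=> _; split=> X p lm pTB.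
- by change (lwins_int TB 0 0 X p lm -> lwins_int TB n n X p lm); rewrite lwins_int_nn.
- by change (lwins_int TB n n X p lm -> lwins_int TB 0 0 X p lm); rewrite lwins_int_nn.
Qed.
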